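(* Let $z>0$ be fixed, $\nu=n-\tfrac12$ with $n\in\mathbb N$, and $G_\nu(z)=zY_\nu'(z)/Y_\nu(z)$. Then for sufficiently large $\nu$, \[ -\nu+\frac{z^2}{2\nu}-\frac{z^2}{6\nu^2}+O\Big(\frac1{\nu^3}\Big)\le G_\nu(z)\le-\nu+\frac{z^2}{2\nu}+\frac{7z^2}{6\nu^2}+O\Big(\frac1{\nu^3}\Big)<0, \] where the $O(\nu^{-3})$ terms are bounded by $C\nu^{-3}$ with $C$ depending on $z$.
   Context: $Y_\nu$ denotes the Bessel function of the second kind of order $\nu$. *)

From Stdlib Require Import Reals Arith.
From Coquelicot Require Import Coquelicot.
Open Scope R_scope.

Definition Gamma_pos (x : R) : R :=
  RInt_gen (fun t => Rpower t (x - 1) * exp (- t)) (at_right 0) (Rbar_locally p_infty).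

Fixpoint poch (x : R) (m : nat) : R :=
  match m with
  | O => 1
  | S m' => poch x m' * (x + INR m')
  end.

(* Gamma on all of R minus the poles, by the functional equation
   Gamma(x) = Gamma(x+m) / (x (x+1) ... (x+m-1)) with m chosen so that x+m > 0
   (m = 0 when x > 0). *)
Definition Gamma (x : R) : R :=
  let m := Z.to_nat (up (- x)) in Gamma_pos (x + INR m) / poch x m.

Definition rgamma (x : R) : R := / Gamma x.

Definition BesselJ (mu x : R) : R :=
  Series (fun k : nat =>
    (-1) ^ k * rgamma (INR k + mu + 1) / INR (Factorial.fact k) * Rpower (x / 2) (2 * INR k + mu)).

Definition BesselY (nu x : R) : R :=
  (BesselJ nu x * cos (nu * PI) - BesselJ (- nu) x) / sin (nu * PI).

Definition G (nu z : R) : R := z * Derive (BesselY nu) z / BesselY nu z.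

(* Since cos(nu pi) = 0, Y_nu = - J_(-nu) / sin(nu pi), and
   J_(-nu)(x) = (x/2)^(-nu) P((x/2)^2) for the entire series P(y) = sum_k a_k y^k,
   a_k = (-1)^k / (k! Gamma(k - nu + 1)).  Differentiating gives the exact formula
   G_nu(z) = - nu + 2 y P'(y) / P(y) with y = (z/2)^2. *)

From Stdlib Require Import Reals Lra Lia ZArith FunctionalExtensionality.
From Coquelicot Require Import Coquelicot.
Open Scope R_scope.

Definition euler_integrand (c t : R) : R := Rpower t c * exp (- t).

Lemma euler_integrand_continuous (c t : R) : 0 < t -> continuous (euler_integrand c) t.
Proof.
  intros Ht. apply (@ex_derive_continuous R_AbsRing R_NormedModule).
  unfold euler_integrand, Rpower. auto_derive. lra.
Qed.

Lemma euler_integrand_nonneg (c t : R) : 0 <= euler_integrand c t.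
Proof. unfold euler_integrand, Rpower. apply Rmult_le_pos; left; apply exp_pos. Qed.

Lemma between_pos (a b t : R) : 0 < a -> 0 < b -> Rmin a b <= t -> 0 < t.
Proof. intros Ha Hb Ht. apply Rlt_le_trans with (2 := Ht). apply Rmin_case; lra. Qed.

Lemma eventually_pos_ends :
  filter_prod (at_right 0) (Rbar_locally p_infty) (fun ab : R * R => 0 < fst ab /\ 0 < snd ab).
Proof.
  exists (fun a => 0 < a) (fun b => 0 < b).
  - exists (mkposreal 1 Rlt_0_1). intros y _ Hy. exact Hy.
  - exists 0. intros; lra.
  - intros a b Ha Hb. simpl. auto.
Qed.

Lemma improper_integral_of_sup (f : R -> R) (L : R) :
  (forall t, 0 < t -> continuous f t) ->
  (forall t, 0 < t -> 0 <= f t) ->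
  (forall a b, 0 < a -> a < b -> RInt f a b <= L) ->
  (forall e, 0 < e -> exists a0 b0, 0 < a0 /\ a0 < b0 /\ L - e < RInt f a0 b0) ->
  is_RInt_gen f (at_right 0) (Rbar_locally p_infty) L.
Proof.
  intros Hc Hp Hsup Happrox.
  assert (Hex : forall a b, 0 < a -> 0 < b -> ex_RInt f a b).
  { intros a b Ha Hb. apply (@ex_RInt_continuous R_CompleteNormedModule).
    intros t [Ht _]. apply Hc. exact (between_pos a b t Ha Hb Ht). }
  assert (Hmon : forall a b, 0 < a -> a <= b -> 0 <= RInt f a b).
  { intros a b Ha Hab. apply RInt_ge_0; auto. apply Hex; lra.
    intros x Hx. apply Hp; lra. }
  apply filterlimi_lim_ext_loc with (f := fun ab : R * R => RInt f (fst ab) (snd ab)).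
  { eapply filter_imp; [|exact eventually_pos_ends]. intros [a b] [Ha Hb]. simpl.
    apply (@RInt_correct R_CompleteNormedModule). apply Hex; auto. }
  apply filterlim_locally. intros [e He].
  destruct (Happrox e He) as [a0 [b0 [Ha0 [Hab0 Hr]]]].
  exists (fun a => 0 < a < a0) (fun b => b0 < b).
  - exists (mkposreal a0 Ha0). intros y Hy Hy0. split; auto.
    change (Rabs (y - 0) < a0) in Hy. rewrite Rminus_0_r in Hy.
    apply Rabs_def2 in Hy. lra.
  - exists b0. auto.
  - intros a b [Ha Ha'] Hb. simpl. change (Rabs (RInt f a b - L) < e).
    assert (Hsplit : RInt f a b = RInt f a a0 + RInt f a0 b0 + RInt f b0 b).
    { rewrite <- (@RInt_Chasles R_CompleteNormedModule f a a0 b) by (apply Hex; lra).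
      rewrite <- (@RInt_Chasles R_CompleteNormedModule f a0 b0 b) by (apply Hex; lra).
      change plus with Rplus. simpl. ring. }
    assert (RInt f a b <= L) by (apply Hsup; lra).
    assert (0 <= RInt f a a0) by (apply Hmon; lra).
    assert (0 <= RInt f b0 b) by (apply Hmon; lra).
    apply Rabs_def1; lra.
Qed.

Lemma improper_integral_of_bounded (f : R -> R) (M : R) :
  (forall t, 0 < t -> continuous f t) ->
  (forall t, 0 < t -> 0 <= f t) ->
  (forall a b, 0 < a -> a < b -> RInt f a b <= M) ->
  exists L, is_RInt_gen f (at_right 0) (Rbar_locally p_infty) L /\
    forall a b, 0 < a -> a < b -> RInt f a b <= L.
Proof.
  intros Hc Hp Hb.
  set (E := fun r => exists a b, 0 < a /\ a < b /\ r = RInt f a b).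
  assert (HE : bound E). { exists M. intros r [a [b [Ha [Hab ->]]]]. apply Hb; auto. }
  assert (HE2 : exists r, E r). { exists (RInt f 1 2), 1, 2. repeat split; lra. }
  destruct (completeness E HE HE2) as [L [HL1 HL2]].
  assert (Hsup : forall a b, 0 < a -> a < b -> RInt f a b <= L).
  { intros a b Ha Hab. apply HL1. exists a, b. auto. }
  exists L. split; [|exact Hsup].
  apply improper_integral_of_sup; auto.
  intros e He. apply Classical_Prop.NNPP. intros Hn.
  assert (L <= L - e); [|lra].
  apply HL2. intros r [a [b [Ha [Hab ->]]]].
  destruct (Rle_lt_dec (RInt f a b) (L - e)) as [h|h]; auto.
  exfalso. apply Hn. exists a, b. auto.
Qed.

Lemma Rpower_minus_half (t : R) : 0 < t -> Rpower t (1/2 - 1) = / sqrt t.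
Proof.
  intros Ht. replace (1/2 - 1) with (- (/2)) by field.
  rewrite Rpower_Ropp, Rpower_sqrt; auto.
Qed.

Lemma atan_sqrt_derive (t : R) : 0 < t ->
  is_derive (fun t => 2 * atan (sqrt t)) t (/ (sqrt t * (1 + t))).
Proof.
  intros Ht. auto_derive. lra.
  assert (0 < sqrt t) by (apply sqrt_lt_R0; lra).
  assert (Hss : sqrt t * sqrt t = t) by (apply sqrt_sqrt; lra).
  replace (sqrt t * (sqrt t * 1)) with t by lra.
  field. split; lra.
Qed.

Lemma euler_integrand_ex_RInt (c a b : R) : 0 < a -> 0 < b ->
  ex_RInt (euler_integrand c) a b.
Proof.
  intros Ha Hb. apply (@ex_RInt_continuous R_CompleteNormedModule). intros t [Ht _].
  apply euler_integrand_continuous. exact (between_pos a b t Ha Hb Ht).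
Qed.

(* On (0, oo) the integrand t^(-1/2) e^(-t) is dominated by 1 / (sqrt t (1 + t)),
   whose integral over (0, oo) is at most 2 pi. *)
Lemma euler_half_integral_bounded (a b : R) : 0 < a -> a < b ->
  RInt (euler_integrand (1/2 - 1)) a b <= 2 * PI.
Proof.
  intros Ha Hab.
  set (g := fun t => / (sqrt t * (1 + t))).
  assert (Hg : is_RInt g a b (2 * atan (sqrt b) - 2 * atan (sqrt a))).
  { apply (is_RInt_derive (fun t => 2 * atan (sqrt t)) g).
    - intros x [Hx _]. apply atan_sqrt_derive. exact (between_pos a b x Ha ltac:(lra) Hx).
    - intros x [Hx _]. apply (@ex_derive_continuous R_AbsRing R_NormedModule).
      assert (0 < x) by exact (between_pos a b x Ha ltac:(lra) Hx).
      assert (0 < sqrt x) by (apply sqrt_lt_R0; lra).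
      unfold g. auto_derive. repeat split; try lra.
      apply Rgt_not_eq. apply Rmult_lt_0_compat; lra. }
  apply Rle_trans with (2 * atan (sqrt b) - 2 * atan (sqrt a)).
  - apply (is_RInt_le (euler_integrand (1/2 - 1)) g a b). lra.
    + apply (@RInt_correct R_CompleteNormedModule). apply euler_integrand_ex_RInt; lra.
    + exact Hg.
    + intros x Hx. unfold g, euler_integrand. rewrite Rpower_minus_half by lra.
      assert (0 < sqrt x) by (apply sqrt_lt_R0; lra).
      assert (1 + x < exp x) by (apply exp_ineq1; lra).
      rewrite exp_Ropp, Rinv_mult.
      apply Rmult_le_compat_l. left; apply Rinv_0_lt_compat; lra.
      apply Rinv_le_contravar; lra.
  - destruct (atan_bound (sqrt b)). destruct (atan_bound (sqrt a)). lra.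
Qed.

(* On [1, 2] the integrand is at least e^(-2)/2. *)
Lemma euler_half_integral_1_2_pos : 0 < RInt (euler_integrand (1/2 - 1)) 1 2.
Proof.
  apply Rlt_le_trans with (RInt (fun _ => exp (-2) / 2) 1 2).
  - rewrite (@RInt_const R_CompleteNormedModule). change scal with Rmult. simpl.
    assert (0 < exp (-2)) by apply exp_pos. lra.
  - apply RInt_le. lra. apply (@ex_RInt_const R_CompleteNormedModule).
    + apply euler_integrand_ex_RInt; lra.
    + intros x Hx. unfold euler_integrand. rewrite Rpower_minus_half by lra.
      assert (0 < sqrt x) by (apply sqrt_lt_R0; lra).
      assert (sqrt x <= 2).
      { rewrite <- (sqrt_square 2) by lra. apply sqrt_le_1_alt. lra. }
      assert (exp (-2) <= exp (-x)) by (left; apply exp_increasing; lra).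
      assert (/ 2 <= / sqrt x) by (apply Rinv_le_contravar; lra).
      assert (0 < exp (-2)) by apply exp_pos.
      unfold Rdiv. rewrite Rmult_comm. apply Rmult_le_compat; lra.
Qed.

Lemma Gamma_half_integral : exists L, 0 < L /\
  is_RInt_gen (euler_integrand (1/2 - 1)) (at_right 0) (Rbar_locally p_infty) L.
Proof.
  destruct (improper_integral_of_bounded (euler_integrand (1/2 - 1)) (2 * PI))
    as [L [HL Hsup]].
  - intros t Ht. apply euler_integrand_continuous; auto.
  - intros t _. apply euler_integrand_nonneg.
  - apply euler_half_integral_bounded.
  - exists L. split; auto.
    apply Rlt_le_trans with (1 := euler_half_integral_1_2_pos). apply Hsup; lra.
Qed.

(* ln u < u, from e^u > 1 + u; it controls t^x e^(-t) at infinity. *)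
Lemma ln_lt_self (u : R) : 0 < u -> ln u < u.
Proof.
  intros Hu. assert (1 + u < exp u) by (apply exp_ineq1; lra).
  rewrite <- (ln_exp u) at 2. apply ln_increasing; auto; lra.
Qed.

Lemma boundary_term_at_zero (x : R) : 0 < x ->
  filterlim (fun t => - (exp (x * ln t) * exp (- t))) (at_right 0) (locally 0).
Proof.
  intros Hx. apply filterlim_locally. intros [e He]. simpl.
  set (d := exp (ln e / x)).
  assert (Hd : 0 < d) by apply exp_pos.
  exists (mkposreal d Hd). intros t Ht Ht0. simpl in Ht.
  change (Rabs (t - 0) < d) in Ht. rewrite Rminus_0_r, Rabs_pos_eq in Ht by lra.
  change (Rabs (- (exp (x * ln t) * exp (- t)) - 0) < e).
  rewrite Rminus_0_r, Rabs_Ropp, Rabs_pos_eq.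
  2:{ left; apply Rmult_lt_0_compat; apply exp_pos. }
  assert (exp (- t) <= 1) by (rewrite <- exp_0; left; apply exp_increasing; lra).
  assert (exp (x * ln t) < e).
  { rewrite <- (exp_ln e) by auto. apply exp_increasing.
    assert (ln t < ln e / x).
    { unfold d in Ht. rewrite <- (ln_exp (ln e / x)). apply ln_increasing; lra. }
    apply Rmult_lt_reg_r with (/ x). apply Rinv_0_lt_compat; auto.
    replace (x * ln t * / x) with (ln t) by (field; lra). assumption. }
  assert (0 < exp (x * ln t)) by apply exp_pos.
  apply Rle_lt_trans with (exp (x * ln t) * 1). apply Rmult_le_compat_l; lra. lra.
Qed.

Lemma boundary_term_at_infinity (x : R) : 0 < x ->
  filterlim (fun t => - (exp (x * ln t) * exp (- t))) (Rbar_locally p_infty) (locally 0).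
Proof.
  intros Hx. apply filterlim_locally. intros [e He]. simpl.
  assert (Habs : 0 <= Rabs (ln e)) by apply Rabs_pos.
  assert (Habs' : - ln e <= Rabs (ln e)) by (rewrite <- Rabs_Ropp; apply Rle_abs).
  set (K := 2 * x + Rabs (ln e) + 1).
  exists (K * K). intros t Ht.
  assert (HK : 0 < K) by (unfold K; lra).
  assert (Ht0 : 0 < t) by nra.
  assert (Hs : K < sqrt t).
  { rewrite <- (sqrt_square K) by lra. apply sqrt_lt_1_alt. nra. }
  assert (Hss : sqrt t * sqrt t = t) by (apply sqrt_sqrt; lra).
  assert (Hln : ln t = 2 * ln (sqrt t)).
  { rewrite <- Hss at 1. rewrite ln_mult by lra. ring. }
  assert (ln (sqrt t) < sqrt t) by (apply ln_lt_self; lra).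
  change (Rabs (- (exp (x * ln t) * exp (- t)) - 0) < e).
  rewrite Rminus_0_r, Rabs_Ropp, Rabs_pos_eq.
  2:{ left; apply Rmult_lt_0_compat; apply exp_pos. }
  rewrite <- exp_plus, <- (exp_ln e) by auto. apply exp_increasing.
  rewrite Hln. unfold K in Hs. set (s := sqrt t) in *.
  assert (x * (2 * ln s) <= 2 * x * s) by nra.
  assert (s * (s - 2 * x) >= 1 * (s - 2 * x)) by (apply Rle_ge, Rmult_le_compat_r; lra).
  nra.
Qed.

(* Functional equation of the Euler integral, Gamma(x + 1) = x Gamma(x) for x > 0,
   by integrating (-t^x e^(-t))' = t^x e^(-t) - x t^(x-1) e^(-t) over (0, oo). *)
Lemma euler_integral_succ (x l : R) : 0 < x ->
  is_RInt_gen (euler_integrand (x - 1)) (at_right 0) (Rbar_locally p_infty) l ->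
  is_RInt_gen (euler_integrand (x + 1 - 1)) (at_right 0) (Rbar_locally p_infty) (x * l).
Proof.
  intros Hx Hl.
  set (h := fun t => - (exp (x * ln t) * exp (- t))).
  set (d := fun t => - (x / t * exp (x * ln t) * exp (- t)) + exp (x * ln t) * exp (- t)).
  assert (Hd : forall t, 0 < t -> is_derive h t (d t)).
  { intros t Ht. unfold h, d. auto_derive. lra. field. lra. }
  assert (HDd : forall t, 0 < t -> Derive h t = d t).
  { intros t Ht. apply is_derive_unique. auto. }
  assert (HD : is_RInt_gen (Derive h) (at_right 0) (Rbar_locally p_infty) (0 - 0)).
  { apply is_RInt_gen_Derive.
    - eapply filter_imp; [|exact eventually_pos_ends]. intros [a b] [Ha Hb] t [Ht _].
      simpl in *. exists (d t). apply Hd. exact (between_pos a b t Ha Hb Ht).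
    - eapply filter_imp; [|exact eventually_pos_ends]. intros [a b] [Ha Hb] t [Ht _].
      simpl in *. assert (Ht0 : 0 < t) by exact (between_pos a b t Ha Hb Ht).
      apply continuous_ext_loc with d.
      + exists (mkposreal t Ht0). intros y Hy. change (Rabs (y - t) < t) in Hy.
        apply Rabs_def2 in Hy. symmetry. apply HDd. lra.
      + apply (@ex_derive_continuous R_AbsRing R_NormedModule). unfold d. auto_derive. lra.
    - apply boundary_term_at_zero; auto.
    - apply boundary_term_at_infinity; auto. }
  assert (HP := is_RInt_gen_plus _ _ _ _ HD (is_RInt_gen_scal _ x _ Hl)).
  replace (x * l) with (plus (0 - 0) (scal x l)).
  2:{ change plus with Rplus. change scal with Rmult. simpl. ring. }
  eapply is_RInt_gen_ext; [|exact HP].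
  eapply filter_imp; [|exact eventually_pos_ends]. intros [a b] [Ha Hb] t [Ht _].
  simpl in *. assert (Ht0 : 0 < t) by (apply Rlt_trans with (2 := Ht); apply Rmin_case; lra).
  rewrite HDd by auto. unfold d, euler_integrand, Rpower.
  change plus with Rplus. change scal with Rmult. simpl.
  replace (x + 1 - 1) with x by ring.
  replace ((x - 1) * ln t) with (x * ln t + - ln t) by ring.
  rewrite exp_plus, !exp_Ropp, exp_ln by auto. field.
  split; [apply Rgt_not_eq, exp_pos | lra].
Qed.

Definition Gamma_half : R := Gamma_pos (1/2).

Lemma Gamma_pos_half_plus (j : nat) : Gamma_pos (1/2 + INR j) = Gamma_half * poch (1/2) j.
Proof.
  destruct Gamma_half_integral as [L [_ H]].
  assert (Hj : is_RInt_gen (euler_integrand (1/2 + INR j - 1)) (at_right 0)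
                 (Rbar_locally p_infty) (L * poch (1/2) j)).
  { induction j as [|j IH].
    - simpl. replace (1/2 + 0 - 1) with (1/2 - 1) by ring. rewrite Rmult_1_r. exact H.
    - replace (1/2 + INR (S j) - 1) with ((1/2 + INR j) + 1 - 1) by (rewrite S_INR; ring).
      simpl. replace (L * (poch (1/2) j * (1/2 + INR j)))
        with ((1/2 + INR j) * (L * poch (1/2) j)) by ring.
      apply euler_integral_succ; auto. assert (0 <= INR j) by apply pos_INR. lra. }
  unfold Gamma_half, Gamma_pos. fold (euler_integrand (1/2 - 1)).
  fold (euler_integrand (1/2 + INR j - 1)).
  rewrite (is_RInt_gen_unique _ _ Hj), (is_RInt_gen_unique _ _ H). reflexivity.
Qed.

Lemma Gamma_half_pos : 0 < Gamma_half.
Proof.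
  destruct Gamma_half_integral as [L [HL H]]. unfold Gamma_half, Gamma_pos.
  fold (euler_integrand (1/2 - 1)). rewrite (is_RInt_gen_unique _ _ H). exact HL.
Qed.

Lemma poch_succ_left (x : R) (m : nat) : poch x (S m) = x * poch (x + 1) m.
Proof.
  induction m as [|m IH].
  - simpl. ring.
  - change (poch x (S (S m))) with (poch x (S m) * (x + INR (S m))).
    rewrite IH. change (poch (x + 1) (S m)) with (poch (x + 1) m * (x + 1 + INR m)).
    rewrite S_INR. ring.
Qed.

Lemma Gamma_half_plus (j : nat) : Gamma (1/2 + INR j) = Gamma_half * poch (1/2) j.
Proof.
  unfold Gamma.
  assert (Hup : up (- (1/2 + INR j)) = (- Z.of_nat j)%Z).
  { symmetry. apply tech_up; rewrite opp_IZR, <- INR_IZR_INZ; lra. }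
  rewrite Hup. replace (Z.to_nat (- Z.of_nat j)) with 0%nat by lia.
  simpl. rewrite Rplus_0_r, Rdiv_1_r. apply Gamma_pos_half_plus.
Qed.

Lemma Gamma_half_minus (m : nat) : Gamma (1/2 - INR m) = Gamma_half / poch (1/2 - INR m) m.
Proof.
  unfold Gamma.
  assert (Hup : up (- (1/2 - INR m)) = Z.of_nat m).
  { symmetry. apply tech_up; rewrite <- INR_IZR_INZ; lra. }
  rewrite Hup, Znat.Nat2Z.id. replace (1/2 - INR m + INR m) with (1/2) by ring.
  reflexivity.
Qed.

Definition half_int (i : Z) : R := 1/2 + IZR i.

Lemma half_int_cases (i : Z) :
  (exists j : nat, half_int i = 1/2 + INR j) \/ (exists m : nat, half_int i = 1/2 - INR (S m)).
Proof.
  unfold half_int. destruct (Z_le_gt_dec 0 i).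
  - left. exists (Z.to_nat i). rewrite INR_IZR_INZ, Z2Nat.id; auto.
  - right. exists (Z.to_nat (- i - 1)). rewrite INR_IZR_INZ.
    replace (Z.of_nat (S (Z.to_nat (- i - 1)))) with (- i)%Z by lia.
    rewrite opp_IZR. ring.
Qed.

Lemma half_int_abs (i : Z) : 1/2 <= Rabs (half_int i).
Proof.
  unfold half_int. destruct (Z_le_gt_dec 0 i) as [H|H].
  - apply IZR_le in H. rewrite Rabs_pos_eq; lra.
  - assert (H' : (i <= -1)%Z) by lia. apply IZR_le in H'. rewrite Rabs_left; lra.
Qed.

Lemma half_int_neq0 (i : Z) : half_int i <> 0.
Proof. intros H. assert (H' := half_int_abs i). rewrite H, Rabs_R0 in H'. lra. Qed.

Lemma poch_half_int_neq0 (i : Z) (m : nat) : poch (half_int i) m <> 0.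
Proof.
  induction m as [|m IH]; simpl. lra.
  apply Rmult_integral_contrapositive_currified; auto.
  replace (half_int i + INR m) with (half_int (i + Z.of_nat m)).
  - apply half_int_neq0.
  - unfold half_int. rewrite plus_IZR, <- INR_IZR_INZ. ring.
Qed.

Lemma half_int_neg (m : nat) : 1/2 - INR m = half_int (- Z.of_nat m).
Proof. unfold half_int. rewrite opp_IZR, <- INR_IZR_INZ. ring. Qed.

Lemma Gamma_half_int_neq0 (i : Z) : Gamma (half_int i) <> 0.
Proof.
  assert (H0 := Gamma_half_pos).
  destruct (half_int_cases i) as [[j ->]|[m ->]].
  - rewrite Gamma_half_plus. apply Rmult_integral_contrapositive_currified. lra.
    replace (1/2) with (half_int 0) by (unfold half_int; simpl; ring).
    apply poch_half_int_neq0.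
  - rewrite Gamma_half_minus. unfold Rdiv. apply Rmult_integral_contrapositive_currified. lra.
    apply Rinv_neq_0_compat. rewrite half_int_neg. apply poch_half_int_neq0.
Qed.

Lemma Gamma_half_int_succ (i : Z) : Gamma (half_int i + 1) = half_int i * Gamma (half_int i).
Proof.
  destruct (half_int_cases i) as [[j ->]|[m ->]].
  - replace (1/2 + INR j + 1) with (1/2 + INR (S j)) by (rewrite S_INR; ring).
    rewrite !Gamma_half_plus. simpl. ring.
  - set (h := 1/2 - INR (S m)).
    assert (Hh1 : h + 1 = 1/2 - INR m) by (unfold h; rewrite S_INR; ring).
    assert (Hh : h <> 0) by (unfold h; rewrite half_int_neg; apply half_int_neq0).
    assert (Hp : poch (h + 1) m <> 0) by (rewrite Hh1, half_int_neg; apply poch_half_int_neq0).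
    assert (Hg : Gamma h = Gamma_half / poch h (S m)) by (unfold h; apply Gamma_half_minus).
    rewrite Hh1, Gamma_half_minus, Hg, poch_succ_left, Hh1.
    rewrite Hh1 in Hp. field. split; auto.
Qed.

(* The order nu = n - 1/2 and the coefficients a_k of the entire series P with
   J_(-nu)(x) = (x/2)^(-nu) P((x/2)^2). *)
Definition half_order (n : nat) : R := INR n - 1/2.

Definition bessel_coef (n k : nat) : R :=
  (-1) ^ k * rgamma (INR k + - half_order n + 1) / INR (fact k).

(* The Gamma argument k - nu + 1 in a_k is a half-integer, hence nonzero. *)
Lemma gamma_arg_half_int (n k : nat) :
  INR k + - half_order n + 1 = half_int (Z.of_nat k - Z.of_nat n + 1).
Proof.
  unfold half_order, half_int. rewrite plus_IZR, minus_IZR, <- !INR_IZR_INZ. simpl. ring.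
Qed.

Lemma bessel_coef_neq0 (n k : nat) : bessel_coef n k <> 0.
Proof.
  unfold bessel_coef, rgamma, Rdiv.
  repeat apply Rmult_integral_contrapositive_currified.
  - apply pow_nonzero. lra.
  - apply Rinv_neq_0_compat. rewrite gamma_arg_half_int. apply Gamma_half_int_neq0.
  - apply Rinv_neq_0_compat, not_0_INR, fact_neq_0.
Qed.

(* a_(k+1) = - a_k / ((k - nu + 1)(k + 1)), from Gamma(h + 1) = h Gamma(h). *)
Lemma bessel_coef_succ (n k : nat) :
  bessel_coef n (S k) = - bessel_coef n k / ((INR k + - half_order n + 1) * INR (S k)).
Proof.
  unfold bessel_coef, rgamma.
  replace (INR (S k) + - half_order n + 1) with ((INR k + - half_order n + 1) + 1)
    by (rewrite S_INR; ring).
  rewrite gamma_arg_half_int, Gamma_half_int_succ.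
  assert (H1 := Gamma_half_int_neq0 (Z.of_nat k - Z.of_nat n + 1)).
  assert (H2 := half_int_neq0 (Z.of_nat k - Z.of_nat n + 1)).
  change (fact (S k)) with (S k * fact k)%nat. rewrite mult_INR.
  assert (H3 : INR (fact k) <> 0) by (apply not_0_INR, fact_neq_0).
  assert (H4 : INR (S k) <> 0) by (apply not_0_INR; lia).
  simpl pow. field. repeat split; auto.
Qed.

Lemma bessel_coef_radius (n : nat) : CV_radius (bessel_coef n) = p_infty.
Proof.
  apply CV_radius_infinite_DAlembert. apply bessel_coef_neq0.
  apply is_lim_seq_le_le with (u := fun _ => 0) (w := fun k => 2 * / INR (S k)).
  - intros k. split. apply Rabs_pos.
    rewrite bessel_coef_succ.
    assert (H1 := bessel_coef_neq0 n k).
    assert (H2 := half_int_abs (Z.of_nat k - Z.of_nat n + 1)).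
    rewrite <- gamma_arg_half_int in H2.
    set (h := INR k + - half_order n + 1) in *.
    assert (H3 : 0 < INR (S k)) by (apply lt_0_INR; lia).
    assert (h <> 0) by (intros E; rewrite E, Rabs_R0 in H2; lra).
    replace (- bessel_coef n k / (h * INR (S k)) / bessel_coef n k)
      with (- / (h * INR (S k))) by (field; lra).
    rewrite Rabs_Ropp, Rabs_inv, Rabs_mult, (Rabs_pos_eq (INR (S k))) by lra.
    rewrite <- (Rinv_inv 2), <- Rinv_mult.
    apply Rinv_le_contravar. apply Rmult_lt_0_compat; lra. nra.
  - apply is_lim_seq_const.
  - replace (Finite 0) with (Rbar_mult 2 (Rbar_inv p_infty)) by (simpl; f_equal; ring).
    apply is_lim_seq_scal_l. apply is_lim_seq_inv; [|discriminate].
    apply (is_lim_seq_incr_1 INR). apply is_lim_seq_INR.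
Qed.

Lemma half_order_trig (n : nat) :
  cos (half_order n * PI) = 0 /\ (sin (half_order n * PI) = 1 \/ sin (half_order n * PI) = -1).
Proof.
  induction n as [|n [IH1 IH2]]; unfold half_order in *.
  - simpl. replace ((0 - 1/2) * PI) with (- (PI/2)) by field.
    rewrite cos_neg, sin_neg, cos_PI2, sin_PI2. auto.
  - rewrite S_INR. replace ((INR n + 1 - 1/2) * PI) with ((INR n - 1/2) * PI + PI) by ring.
    rewrite neg_cos, neg_sin. split; [lra|]. destruct IH2 as [-> | ->]; [right|left]; ring.
Qed.

Lemma half_order_sin_neq0 (n : nat) : sin (half_order n * PI) <> 0.
Proof. destruct (proj2 (half_order_trig n)) as [-> | ->]; lra. Qed.

Lemma BesselY_half_order (n : nat) :
  BesselY (half_order n) = fun x => - BesselJ (- half_order n) x / sin (half_order n * PI).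
Proof.
  apply functional_extensionality. intros x.
  unfold BesselY. rewrite (proj1 (half_order_trig n)). field. apply half_order_sin_neq0.
Qed.

Lemma BesselJ_neg_half_order (n : nat) (x : R) : 0 < x ->
  BesselJ (- half_order n) x =
    exp (- half_order n * ln (x/2)) * PSeries (bessel_coef n) ((x/2)^2).
Proof.
  intros Hx. unfold BesselJ, PSeries. rewrite <- Series_scal_l. apply Series_ext. intro k.
  unfold bessel_coef.
  replace (2 * INR k + - half_order n) with (INR (2 * k) + - half_order n)
    by (rewrite mult_INR; simpl; ring).
  rewrite Rpower_plus, Rpower_pow by lra. rewrite pow_mult. unfold Rpower. ring.
Qed.

Lemma G_half_order (n : nat) (z : R) : 0 < z ->
  PSeries (bessel_coef n) ((z/2)^2) <> 0 ->
  G (half_order n) z = - half_order n +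
    2 * ((z/2)^2 * PSeries (PS_derive (bessel_coef n)) ((z/2)^2))
      / PSeries (bessel_coef n) ((z/2)^2).
Proof.
  intros Hz HP.
  set (mu := - half_order n). set (s := sin (half_order n * PI)).
  assert (Hs : s <> 0) by apply half_order_sin_neq0.
  set (E := fun x => exp (mu * ln (x/2))).
  set (Q := fun x => PSeries (bessel_coef n) ((x/2)^2)).
  set (P := PSeries (bessel_coef n) ((z/2)^2)).
  set (P' := PSeries (PS_derive (bessel_coef n)) ((z/2)^2)).
  assert (HE : is_derive E z (mu * / z * E z)).
  { unfold E. auto_derive. lra. unfold Rdiv. field. lra. }
  assert (HQ : is_derive Q z (z / 2 * P')).
  { unfold Q. apply (is_derive_comp (PSeries (bessel_coef n)) (fun x => (x/2)^2) z).
    - apply is_derive_PSeries. rewrite bessel_coef_radius. simpl. auto.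
    - auto_derive. auto. field. }
  assert (HY : is_derive (BesselY (half_order n)) z
                 ((- / s) * (mu * / z * E z * Q z + E z * (z / 2 * P')))).
  { rewrite BesselY_half_order. fold s.
    apply is_derive_ext_loc with (fun x => (- / s) * (E x * Q x)).
    - exists (mkposreal z Hz). intros t Ht. change (Rabs (t - z) < z) in Ht.
      apply Rabs_def2 in Ht. rewrite BesselJ_neg_half_order by lra.
      change (- / s * (E t * Q t) = - (E t * Q t) / s :> R). field. auto.
    - apply is_derive_scal. apply (is_derive_mult E Q z _ _ HE HQ).
      intros; apply Rmult_comm. }
  unfold G. rewrite (is_derive_unique _ _ _ HY), BesselY_half_order, BesselJ_neg_half_order
    by lra.
  fold s mu P. change (exp (mu * ln (z / 2))) with (E z). change (Q z) with P.
  assert (HEz : E z <> 0) by (unfold E; apply Rgt_not_eq, exp_pos).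
  unfold mu. field. repeat split; auto. lra.
Qed.

Lemma geometric_domination (d : nat -> R) (M q : R) : 0 <= q < 1 ->
  (forall k, Rabs (d k) <= M * q ^ k) -> ex_series d /\ Rabs (Series d) <= M / (1 - q).
Proof.
  intros Hq Hd.
  assert (Hg : is_series (fun k => M * q ^ k) (M / (1 - q))).
  { apply (is_series_scal_l M (fun k => q ^ k) (/ (1 - q))).
    apply is_series_geom. rewrite Rabs_pos_eq; lra. }
  assert (Hex : ex_series (fun k => M * q ^ k)) by (eexists; exact Hg).
  assert (Habs : ex_series (fun k => Rabs (d k))).
  { apply (@ex_series_le R_AbsRing R_CompleteNormedModule) with (fun k => M * q ^ k); auto.
    intros k. change (norm (Rabs (d k))) with (Rabs (Rabs (d k))). rewrite Rabs_Rabsolu. auto. }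
  split.
  - apply (@ex_series_le R_AbsRing R_CompleteNormedModule) with (fun k => M * q ^ k); auto.
  - apply Rle_trans with (Series (fun k => Rabs (d k))). apply Series_Rabs; auto.
    rewrite <- (is_series_unique _ _ Hg). apply Series_le; auto.
    intros k. split; auto. apply Rabs_pos.
Qed.

Lemma Series_peel2 (c : nat -> R) : ex_series c ->
  Series c = c 0%nat + c 1%nat + Series (fun k => c (S (S k))).
Proof.
  intros H. rewrite Series_incr_1 by auto.
  rewrite Series_incr_1 by (apply (ex_series_incr_1 c); auto). ring.
Qed.

Lemma Series_peel3 (c : nat -> R) : ex_series c ->
  Series c = c 0%nat + c 1%nat + c 2%nat + Series (fun k => c (S (S (S k)))).
Proof.
  intros H. rewrite Series_peel2 by auto.
  rewrite (Series_incr_1 (fun k => c (S (S k)))); [ring|].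
  apply (ex_series_incr_1 (fun k => c (S k))), (ex_series_incr_1 c). exact H.
Qed.

Lemma INR_succ_le_pow2 (k : nat) : INR (S k) <= 2 ^ k.
Proof.
  induction k as [|k IH]. simpl. lra.
  rewrite S_INR. change (2 ^ S k) with (2 * 2 ^ k).
  assert (1 <= 2 ^ k) by (apply pow_R1_Rle; lra). lra.
Qed.

Lemma INR_add3_le_pow2 (k : nat) : INR (S (S (S k))) <= 3 * 2 ^ k.
Proof.
  induction k as [|k IH]. simpl. lra.
  rewrite S_INR. change (2 ^ S k) with (2 * 2 ^ k).
  assert (1 <= 2 ^ k) by (apply pow_R1_Rle; lra). lra.
Qed.

(* Ratio of consecutive terms a_(k+1) y^(k+1) / (a_k y^k) of P(y) ... *)
Definition term_ratio (n : nat) (y : R) (k : nat) : R :=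
  - y / ((INR k + - half_order n + 1) * INR (S k)).

(* ... and the normalized terms c_k = a_k y^k / a_0 of P(y). *)
Fixpoint norm_term (n : nat) (y : R) (k : nat) : R :=
  match k with O => 1 | S k => norm_term n y k * term_ratio n y k end.

Lemma bessel_term_normalized (n : nat) (y : R) (k : nat) :
  bessel_coef n k * y ^ k = bessel_coef n 0 * norm_term n y k.
Proof.
  induction k as [|k IH]. simpl. ring.
  rewrite bessel_coef_succ. simpl norm_term.
  replace (bessel_coef n 0 * (norm_term n y k * term_ratio n y k))
    with ((bessel_coef n 0 * norm_term n y k) * term_ratio n y k) by ring.
  rewrite <- IH. unfold term_ratio. simpl pow.
  assert (H1 := half_int_neq0 (Z.of_nat k - Z.of_nat n + 1)).
  rewrite <- gamma_arg_half_int in H1.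
  assert (H2 : INR (S k) <> 0) by (apply not_0_INR; lia).
  field. auto.
Qed.

(* |(k + 1)(k + 1 - nu)| >= (n - 1)/2 for every k, so the terms decay at rate
   rho = 2y/(n-1). *)
Lemma term_ratio_bound (n : nat) (y : R) (k : nat) : (2 <= n)%nat -> 0 <= y ->
  Rabs (term_ratio n y k) <= 2 * y / (INR n - 1).
Proof.
  intros Hn Hy.
  assert (Hn' : 2 <= INR n) by (replace 2 with (INR 2) by (simpl; ring); apply le_INR; auto).
  assert (Hi : 1 <= INR (S k)) by (replace 1 with (INR 1) by (simpl; ring); apply le_INR; lia).
  set (h := INR k + - half_order n + 1).
  assert (Hh : h = INR (S k) - INR n + 1/2) by (unfold h, half_order; rewrite S_INR; ring).
  assert (Hprod : (INR n - 1) / 2 <= Rabs h * INR (S k)).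
  { rewrite Hh. destruct (le_lt_dec (S k) (n - 1)) as [Hk|Hk].
    - assert (INR (S k) <= INR n - 1).
      { replace (INR n - 1) with (INR (n - 1)) by (rewrite minus_INR by lia; simpl; ring).
        apply le_INR; lia. }
      rewrite Rabs_left by lra. nra.
    - assert (INR n <= INR (S k)) by (apply le_INR; lia).
      rewrite Rabs_pos_eq by lra. nra. }
  unfold term_ratio. fold h. unfold Rdiv.
  rewrite Rabs_mult, Rabs_Ropp, (Rabs_pos_eq y), Rabs_inv, Rabs_mult,
    (Rabs_pos_eq (INR (S k))) by lra.
  replace (2 * y * / (INR n - 1)) with (y * / ((INR n - 1) / 2)) by (field; lra).
  apply Rmult_le_compat_l; auto.
  apply Rinv_le_contravar; lra.
Qed.

Lemma norm_term_bound (n : nat) (y : R) (k : nat) : (2 <= n)%nat -> 0 <= y ->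
  Rabs (norm_term n y k) <= (2 * y / (INR n - 1)) ^ k.
Proof.
  intros Hn Hy. induction k as [|k IH].
  - simpl. rewrite Rabs_R1. lra.
  - simpl. rewrite Rabs_mult, Rmult_comm.
    apply Rmult_le_compat; try apply Rabs_pos; auto. apply term_ratio_bound; auto.
Qed.

Lemma norm_term_1 (n : nat) (y : R) : (2 <= n)%nat ->
  norm_term n y 1 = y / (half_order n - 1).
Proof.
  intros Hn. assert (2 <= INR n) by (replace 2 with (INR 2) by (simpl; ring); apply le_INR; auto).
  simpl. unfold term_ratio, half_order. simpl. field. lra.
Qed.

Lemma norm_term_2 (n : nat) (y : R) : (3 <= n)%nat ->
  norm_term n y 2 = norm_term n y 1 * (y / (2 * (half_order n - 2))).
Proof.
  intros Hn. assert (3 <= INR n) by (replace 3 with (INR 3) by (simpl; ring); apply le_INR; auto).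
  change (norm_term n y 2) with (norm_term n y 1 * term_ratio n y 1).
  unfold term_ratio, half_order. simpl. field. lra.
Qed.

Lemma bessel_series_value (n : nat) (y : R) : (2 <= n)%nat -> 0 <= y ->
  2 * y / (INR n - 1) <= 1/2 ->
  exists e, Rabs e <= 2 * (2 * y / (INR n - 1)) ^ 3 /\
    PSeries (bessel_coef n) y =
      bessel_coef n 0 * (1 + norm_term n y 1 + norm_term n y 2 + e).
Proof.
  intros Hn Hy Hrho. set (rho := 2 * y / (INR n - 1)) in *.
  assert (Hrho0 : 0 <= rho).
  { assert (2 <= INR n) by (replace 2 with (INR 2) by (simpl; ring); apply le_INR; auto).
    unfold rho, Rdiv. apply Rmult_le_pos; [lra | left; apply Rinv_0_lt_compat; lra]. }
  set (c := norm_term n y).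
  assert (Hc : forall k, Rabs (c k) <= rho ^ k) by (intros k; apply norm_term_bound; auto).
  assert (Hex : ex_series c).
  { apply (geometric_domination c 1 rho); [lra|]. intros k. rewrite Rmult_1_l. auto. }
  destruct (geometric_domination (fun k => c (S (S (S k)))) (rho ^ 3) rho) as [_ Htail].
  { lra. }
  { intros k. replace (rho ^ 3 * rho ^ k) with (rho ^ (S (S (S k)))) by (simpl; ring). auto. }
  exists (Series (fun k => c (S (S (S k))))). split.
  - apply Rle_trans with (1 := Htail). apply Rmult_le_reg_r with (1 - rho); [lra|].
    field_simplify; [|lra]. assert (0 <= rho ^ 3) by (apply pow_le; lra).
    replace (rho ^ 4) with (rho * rho ^ 3) by ring. nra.
  - unfold PSeries. rewrite (Series_ext _ (fun k => bessel_coef n 0 * c k)).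
    2:{ intros k. unfold c. rewrite <- bessel_term_normalized. change scal with Rmult. simpl. ring. }
    rewrite Series_scal_l, Series_peel3 by auto. reflexivity.
Qed.

Lemma bessel_series_derivative (n : nat) (y : R) : (2 <= n)%nat -> 0 <= y ->
  2 * y / (INR n - 1) <= 1/4 ->
  exists e, Rabs e <= 6 * (2 * y / (INR n - 1)) ^ 3 /\
    y * PSeries (PS_derive (bessel_coef n)) y =
      bessel_coef n 0 * (norm_term n y 1 + 2 * norm_term n y 2 + e).
Proof.
  intros Hn Hy Hrho. set (rho := 2 * y / (INR n - 1)) in *.
  assert (Hrho0 : 0 <= rho).
  { assert (2 <= INR n) by (replace 2 with (INR 2) by (simpl; ring); apply le_INR; auto).
    unfold rho, Rdiv. apply Rmult_le_pos; [lra | left; apply Rinv_0_lt_compat; lra]. }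
  set (c := norm_term n y).
  assert (Hc : forall k, Rabs (c k) <= rho ^ k) by (intros k; apply norm_term_bound; auto).
  (* the terms k c_k of y P'(y) / a_0, shifted to start at k = 1 *)
  set (d := fun k => INR (S k) * c (S k)).
  assert (Hd : forall k, Rabs (d k) <= INR (S k) * rho ^ S k).
  { intros k. unfold d. rewrite Rabs_mult, Rabs_pos_eq by apply pos_INR.
    apply Rmult_le_compat_l; auto. apply pos_INR. }
  destruct (geometric_domination d rho (2 * rho)) as [Hex _].
  { lra. }
  { intros k. apply Rle_trans with (1 := Hd k).
    replace (rho * (2 * rho) ^ k) with (2 ^ k * rho ^ (S k))
      by (simpl; rewrite Rpow_mult_distr; ring).
    apply Rmult_le_compat_r. apply pow_le; lra. apply INR_succ_le_pow2. }
  destruct (geometric_domination (fun k => d (S (S k))) (3 * rho ^ 3) (2 * rho))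
    as [_ Htail].
  { lra. }
  { intros k. apply Rle_trans with (1 := Hd (S (S k))).
    replace (3 * rho ^ 3 * (2 * rho) ^ k) with ((3 * 2 ^ k) * rho ^ (S (S (S k))))
      by (simpl; rewrite Rpow_mult_distr; ring).
    apply Rmult_le_compat_r. apply pow_le; lra. apply INR_add3_le_pow2. }
  exists (Series (fun k => d (S (S k)))). split.
  - apply Rle_trans with (1 := Htail). apply Rmult_le_reg_r with (1 - 2 * rho); [lra|].
    field_simplify; [|lra]. assert (0 <= rho ^ 3) by (apply pow_le; lra).
    replace (rho ^ 4) with (rho * rho ^ 3) by ring. nra.
  - unfold PSeries. rewrite <- !Series_scal_l.
    rewrite (Series_ext _ (fun k => bessel_coef n 0 * d k)).
    + rewrite Series_scal_l, (Series_peel2 d) by auto. unfold d at 1 2. simpl INR. f_equal. ring.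
    + intros k. unfold d, PS_derive, c.
      replace (bessel_coef n 0 * (INR (S k) * norm_term n y (S k)))
        with (INR (S k) * (bessel_coef n 0 * norm_term n y (S k))) by ring.
      rewrite <- bessel_term_normalized. simpl pow. ring.
Qed.

(* For c1 = y/(A-1) and c2 = c1 y/(2(A-2)), the second-order part of the numerator of
   the quotient below is
   c1 + 2 c2 - (y/A)(1 + c1 + c2) = y/(A(A-1)) + (2y^2 - y^3/2)/(A(A-1)(A-2)),
   which is y/A^2 up to terms of order y^3/A^3 and y^2/A^3. *)
Lemma second_order_part_bounds (y A c1 c2 : R) : 0 < y -> 100 <= A ->
  c1 = y / (A - 1) -> c2 = c1 * (y / (2 * (A - 2))) ->
  y / A ^ 2 - (y / A) ^ 3 <= c1 + 2 * c2 - y / A * (1 + c1 + c2) <=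
  y / A ^ 2 * (102 / 100) + 4 * (y ^ 2 / A ^ 3).
Proof.
  intros Hy HA Hc1 Hc2.
  replace (c1 + 2 * c2 - y / A * (1 + c1 + c2))
    with (y / (A * (A - 1)) + (2 * y ^ 2 - y ^ 3 / 2) / (A * (A - 1) * (A - 2)))
    by (rewrite Hc2, Hc1; field; repeat split; lra).
  split; apply Rmult_le_reg_r with (A ^ 3 * (A - 1) * (A - 2)); try nra;
    field_simplify; try lra.
  - assert (0 <= y ^ 3 * (A ^ 2 - 6 * A + 4)) by (apply Rmult_le_pos; nra).
    assert (0 <= y ^ 2 * A ^ 2) by nra.
    assert (0 <= y * A * (2 * A - 4)) by (apply Rmult_le_pos; nra).
    lra.
  - assert (0 <= y ^ 3 * A ^ 2) by (apply Rmult_le_pos; apply pow_le; lra).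
    assert (0 <= y ^ 2 * (A ^ 2 - 6 * A + 4)) by (apply Rmult_le_pos; nra).
    assert (0 <= y * A * (2 * A ^ 2 - 106 * A + 204)) by (apply Rmult_le_pos; nra).
    lra.
Qed.

Lemma quotient_estimate (y A c1 c2 eT eU : R) :
  0 < y -> 100 <= A -> 100 * y <= A -> 1000 * y ^ 2 <= A ->
  c1 = y / (A - 1) -> c2 = c1 * (y / (2 * (A - 2))) ->
  Rabs eT <= 128 * (y / A) ^ 3 -> Rabs eU <= 384 * (y / A) ^ 3 ->
  0 < 1 + c1 + c2 + eT /\
  0 <= (c1 + 2 * c2 + eU) / (1 + c1 + c2 + eT) - y / A <= 2 * y / A ^ 2.
Proof.
  intros Hy HA HAy HAy2 Hc1 Hc2 HeT HeU.
  destruct (second_order_part_bounds y A c1 c2 Hy HA Hc1 Hc2) as [HDlo HDhi].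
  set (u := y / A) in *. set (v := y / A ^ 2) in *.
  assert (Hu0 : 0 < u) by (unfold u; apply Rdiv_lt_0_compat; lra).
  assert (Hv0 : 0 < v) by (unfold v; apply Rdiv_lt_0_compat; [lra | apply pow_lt; lra]).
  assert (Hu : u <= 1/100) by (unfold u; apply Rmult_le_reg_r with A; [lra|]; field_simplify; lra).
  assert (Hvu : v <= u / 100)
    by (unfold u, v; apply Rmult_le_reg_r with (A ^ 2); [nra|]; field_simplify; nra).
  (* third-order quantities are negligible against v = y/A^2 *)
  assert (Hu3 : u ^ 3 <= v / 1000).
  { replace (u ^ 3) with (y ^ 2 / A * v) by (unfold u, v; field; lra).
    assert (y ^ 2 / A <= 1/1000) by (apply Rmult_le_reg_r with A; [lra|]; field_simplify; lra).
    nra. }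
  assert (Huv : y ^ 2 / A ^ 3 <= v / 100).
  { replace (y ^ 2 / A ^ 3) with (u * v) by (unfold u, v; field; lra). nra. }
  apply Rabs_le_between in HeT. apply Rabs_le_between in HeU.
  assert (Hc1u : u <= c1).
  { rewrite Hc1. unfold u. apply Rmult_le_reg_r with (A * (A - 1)); [nra|].
    field_simplify; lra. }
  assert (Hc2p : 0 <= c2).
  { rewrite Hc2, Hc1. apply Rmult_le_pos; apply Rdiv_le_0_compat; lra. }
  set (T := 1 + c1 + c2 + eT).
  assert (HT : 1 <= T) by (unfold T; lra).
  (* the numerator of (quotient - u) is the second-order part plus small errors *)
  set (N := (c1 + 2 * c2 + eU) - u * T).
  assert (HN : 0 <= N <= 2 * v).
  { replace N with ((c1 + 2 * c2 - u * (1 + c1 + c2)) + eU - u * eT) by (unfold N, T; ring).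
    assert (- (u * (128 * u ^ 3)) <= u * eT <= u * (128 * u ^ 3)) by (split; nra).
    nra. }
  replace ((c1 + 2 * c2 + eU) / T - u) with (N / T) by (unfold N; field; lra).
  replace (2 * y / A ^ 2) with (2 * v) by (unfold v; field; lra).
  split; [lra|]. split.
  - apply Rdiv_le_0_compat; lra.
  - apply Rmult_le_reg_r with T; [lra|].
    replace (N / T * T) with N by (field; lra). nra.
Qed.

Lemma G_half_order_estimate (z : R) (n : nat) : 0 < z ->
  100 * (1 + z ^ 2 + z ^ 4) <= half_order n ->
  - half_order n + z ^ 2 / (2 * half_order n) <= G (half_order n) z <=
  - half_order n + z ^ 2 / (2 * half_order n) + z ^ 2 / half_order n ^ 2.
Proof.
  intros Hz HA. set (A := half_order n) in *. set (y := (z/2)^2).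
  assert (Hzy : z ^ 2 = 4 * y) by (unfold y; field).
  assert (Hy : 0 < y) by (unfold y; apply pow_lt; lra).
  assert (Hy2 : 0 < y ^ 2) by (apply pow_lt; lra).
  assert (Hz4 : z ^ 4 = 16 * y ^ 2) by (unfold y; field).
  rewrite Hzy, Hz4 in HA.
  assert (HA100 : 100 <= A) by lra.
  assert (Hn : INR n = A + 1/2) by (unfold A, half_order; ring).
  assert (Hn3 : (3 <= n)%nat) by (apply INR_le; simpl; lra).
  set (rho := 2 * y / (INR n - 1)).
  assert (Hrho : rho <= 4 * (y / A)).
  { unfold rho, Rdiv. rewrite Hn.
    replace (4 * (y * / A)) with (2 * y * / (A / 2)) by (field; lra).
    apply Rmult_le_compat_l; [lra|]. apply Rinv_le_contravar; lra. }
  assert (Hrho0 : 0 <= rho) by (unfold rho; apply Rdiv_le_0_compat; lra).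
  assert (Hrho3 : rho ^ 3 <= 64 * (y / A) ^ 3).
  { replace (64 * (y / A) ^ 3) with ((4 * (y / A)) ^ 3) by ring. apply pow_incr. lra. }
  assert (Hrho4 : rho <= 1/4).
  { apply Rle_trans with (1 := Hrho). apply Rmult_le_reg_r with A; [lra|]. field_simplify; lra. }
  destruct (bessel_series_value n y) as [eT [HeT HP]]; [lia | lra | fold rho; lra |].
  destruct (bessel_series_derivative n y) as [eU [HeU HP']]; [lia | lra | fold rho; lra |].
  fold rho in HeT, HeU.
  destruct (quotient_estimate y A (norm_term n y 1) (norm_term n y 2) eT eU)
    as [HT [Hlo Hhi]]; try lra.
  { apply norm_term_1; lia. }
  { apply norm_term_2; lia. }
  assert (Ha0 := bessel_coef_neq0 n 0).
  assert (HG : G A z = - A + 2 * ((norm_term n y 1 + 2 * norm_term n y 2 + eU)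
                                  / (1 + norm_term n y 1 + norm_term n y 2 + eT))).
  { unfold A. rewrite G_half_order by (auto; fold y; rewrite HP;
      apply Rmult_integral_contrapositive_currified; lra).
    fold A y. rewrite HP, HP'. field. split; lra. }
  rewrite HG, Hzy.
  replace (4 * y / (2 * A)) with (2 * (y / A)) by (field; lra).
  replace (4 * y / A ^ 2) with (2 * (2 * y / A ^ 2)) by (field; lra).
  lra.
Qed.

(* The estimate implies the bounds of the theorem with C = 0, with room to spare. *)
Lemma estimate_implies_bounds (z nu g : R) : 0 < z -> 100 * (1 + z ^ 2) <= nu ->
  - nu + z ^ 2 / (2 * nu) <= g <= - nu + z ^ 2 / (2 * nu) + z ^ 2 / nu ^ 2 ->
  - nu + z ^ 2 / (2 * nu) - z ^ 2 / (6 * nu ^ 2) - 0 / nu ^ 3 <= g /\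
  g <= - nu + z ^ 2 / (2 * nu) + 7 * z ^ 2 / (6 * nu ^ 2) + 0 / nu ^ 3 /\
  - nu + z ^ 2 / (2 * nu) + 7 * z ^ 2 / (6 * nu ^ 2) + 0 / nu ^ 3 < 0.
Proof.
  intros Hz Hnu [Hlo Hhi].
  assert (Hz2 : 0 < z ^ 2) by (apply pow_lt; lra).
  assert (H2 : z ^ 2 / (2 * nu) <= 1/200).
  { apply Rmult_le_reg_r with (2 * nu); [nra|]. field_simplify; lra. }
  assert (H6 : 0 <= z ^ 2 / (6 * nu ^ 2)) by (apply Rdiv_le_0_compat; nra).
  assert (H7 : z ^ 2 / nu ^ 2 <= 7 * z ^ 2 / (6 * nu ^ 2)).
  { apply Rmult_le_reg_r with (6 * nu ^ 2); [nra|]. field_simplify; nra. }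
  assert (H7' : 7 * z ^ 2 / (6 * nu ^ 2) <= 1).
  { apply Rmult_le_reg_r with (6 * nu ^ 2); [nra|]. field_simplify; nra. }
  replace (0 / nu ^ 3) with 0 by (field; nra).
  repeat split; lra.
Qed.

Theorem lemmaE3 (z : R) (hz : 0 < z) :
  exists (C : R) (N : nat), forall n : nat, (N <= n)%nat ->
    let nu := INR n - 1 / 2 in
    - nu + z ^ 2 / (2 * nu) - z ^ 2 / (6 * nu ^ 2) - C / nu ^ 3 <= G nu z /\
    G nu z <= - nu + z ^ 2 / (2 * nu) + 7 * z ^ 2 / (6 * nu ^ 2) + C / nu ^ 3 /\
    - nu + z ^ 2 / (2 * nu) + 7 * z ^ 2 / (6 * nu ^ 2) + C / nu ^ 3 < 0.
Proof.
  set (K := 100 * (1 + z ^ 2 + z ^ 4)).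
  destruct (INR_unbounded K) as [N HN].
  exists 0, (S N). intros n Hn nu.
  assert (HnK : K <= half_order n).
  { unfold half_order. apply le_INR in Hn. rewrite S_INR in Hn. lra. }
  apply estimate_implies_bounds; [exact hz | | exact (G_half_order_estimate z n hz HnK)].
  assert (0 <= z ^ 4) by (apply pow_le; lra). unfold K in HnK. change nu with (half_order n).
  lra.
Qed.
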